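(* Let $T$ be a horizon with $T>25\log T$. Consider the two-armed instance in which arm 1 is Bernoulli with mean $\mu_1=(2e)^{-T}$ and arm 2 is Bernoulli with mean $\mu_2=1$. Then the UCB algorithm run for $T$ rounds on this instance has Nash regret $$\textsc{NR}_T\ge 1-\frac1T.$$
   Context: Nash regret: $\textsc{NR}_T:=\mu^*-\big(\prod_{t=1}^T\mathbb{E}[\mu_{I_t}]\big)^{1/T}$, where $I_t$ is the arm pulled in round $t$ and $\mu^*=\max_i\mu_i$. $\log$ is the natural logarithm. UCB algorithm: in each round $t$ it pulls an arm maximizing $\mathrm{UCB}_{i,t}:=\widehat\mu_i+\sqrt{\frac{2\log T}{n_{i,t}}}$, where $n_{i,t}$ is the number of times arm $i$ was pulled before round $t$ and $\widehat\mu_i$ its empirical mean (an arm not yet pulled has index $+\infty$); ties are broken by an arbitrary but fixed deterministic rule. *)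

From HB Require Import structures.
From mathcomp Require Import all_boot all_order all_algebra.
From mathcomp Require Import all_classical all_reals all_analysis.
Set Implicit Arguments. Unset Strict Implicit. Unset Printing Implicit Defensive.
Import Order.TTheory GRing.Theory Num.Theory.
Local Open Scope ring_scope.

(* A history is the sequence of (arm pulled, reward observed) pairs. *)
Definition npulls (K : nat) (h : seq ('I_K * bool)) (i : 'I_K) : nat :=
  count (fun p => p.1 == i) h.

Definition rsum (R : realType) (K : nat) (h : seq ('I_K * bool)) (i : 'I_K) : R :=
  \sum_(p <- h | p.1 == i) (p.2 : nat)%:R.

Definition ucb (R : realType) (K T : nat) (h : seq ('I_K * bool)) (i : 'I_K) : \bar R :=
  if npulls h i == 0%N then +oo%E
  else ((rsum R h i / (npulls h i)%:R)
        + Num.sqrt (2 * ln (T%:R : R) / (npulls h i)%:R))%:E.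

Definition ucb_max (R : realType) (K T : nat) (h : seq ('I_K * bool)) : {set 'I_K} :=
  [set i | [forall j, (ucb R T h j <= ucb R T h i)%E]].

(* History after t rounds of UCB, with tie-breaking rule tb (a fixed deterministic
   selection from the set of maximizers) and reward table X (X a t = reward arm a
   would give in round t). *)
Fixpoint ucb_hist (R : realType) (K T : nat) (tb : {set 'I_K} -> 'I_K)
    (X : 'I_K -> nat -> bool) (t : nat) : seq ('I_K * bool) :=
  match t with
  | 0 => [::]
  | t'.+1 => let h := ucb_hist R T tb X t' in
             let a := tb (ucb_max R T h) in rcons h (a, X a t')
  end.

(* Arm pulled by UCB in round t (rounds numbered 0 .. T-1). *)
Definition ucb_arm (R : realType) (K T : nat) (tb : {set 'I_K} -> 'I_K)
    (X : 'I_K -> nat -> bool) (t : nat) : 'I_K :=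
  tb (ucb_max R T (ucb_hist R T tb X t)).

(* Sample space: independent Bernoulli reward for every (arm, round). *)
Definition omega (K T : nat) := {ffun 'I_K * 'I_T -> bool}.

Definition rew (K T : nat) (w : omega K T) (a : 'I_K) (t : nat) : bool :=
  match (insub t : option 'I_T) with Some t' => w (a, t') | None => false end.

Definition prob (R : realType) (K T : nat) (mu : 'I_K -> R) (w : omega K T) : R :=
  \prod_(p : 'I_K * 'I_T) (if w p then mu p.1 else 1 - mu p.1).

Definition exp_mean (R : realType) (K T : nat) (mu : 'I_K -> R)
    (tb : {set 'I_K} -> 'I_K) (t : nat) : R :=
  \sum_(w : omega K T) prob mu w * mu (ucb_arm R T tb (@rew K T w) t).

Definition mu_star (R : realType) (K : nat) (mu : 'I_K -> R) : R :=
  \big[Num.max/0]_(i < K) mu i.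

Definition nash_regret (R : realType) (K : nat) (mu : 'I_K -> R) (T : nat)
    (tb : {set 'I_K} -> 'I_K) : R :=
  mu_star mu - powR (\prod_(t < T) exp_mean T mu tb t) (T%:R)^-1.

From HB Require Import structures.
From mathcomp Require Import all_boot all_order all_algebra.
From mathcomp Require Import all_classical all_reals all_analysis.
From mathcomp Require Import zify lra.
Import Order.TTheory GRing.Theory Num.Theory.
Local Open Scope ring_scope.
Set Implicit Arguments. Unset Strict Implicit.

(* Let w be the outcome in which arm 1 always pays 0 and arm 2 always pays 1;
   its probability is at least 1 - T mu_1.  On w, UCB pulls arm 1 at least
   log T times: otherwise, after about 13 log T rounds arm 2 has been pulled
   at least 12 log T times, so the index sqrt(2 log T / n_1) of arm 1 exceeds
   the index 1 + sqrt(2 log T / n_2) of arm 2, and arm 1 is pulled in all the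
   remaining rounds.  In a round where UCB pulls arm 1 on w we get
   E[mu_{I_t}] <= mu_1 + (1 - P(w)) <= (T + 1) mu_1 <= e^{-T}, so the product
   of the expected means is at most e^{-T log T} = T^{-T}, whose T-th root is
   1/T, while mu* = 1. *)

Lemma prod_ge_1_sub_sum (R : realDomainType) (I : Type) (s : seq I) (f : I -> R) :
  (forall i, 0 <= f i <= 1) -> 1 - \sum_(i <- s) (1 - f i) <= \prod_(i <- s) f i.
Proof.
move=> f01; elim: s => [|i s IH]; first by rewrite !big_nil; lra.
rewrite !big_cons.
have hS : 0 <= \sum_(j <- s) (1 - f j).
  by apply: sumr_ge0 => j _; have := f01 j; lra.
have /andP[fi0 fi1] := f01 i.
have : f i * (1 - \sum_(j <- s) (1 - f j)) <= f i * \prod_(j <- s) f j.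
  exact: ler_wpM2l.
nra.
Qed.

Lemma prod_le_expr_count (R : realDomainType) (f : nat -> R) (a : R) (P : pred nat) n :
  0 <= a -> (forall i, 0 <= f i <= 1) -> (forall i, P i -> f i <= a) ->
  \prod_(i < n) f i <= a ^+ count P (iota 0 n).
Proof.
move=> a0 f01 fa; elim: n => [|n IH]; first by rewrite big_ord0.
rewrite big_ord_recr -[in iota _ n.+1]addn1 iotaD count_cat /= addn0 exprD.
have /andP[fn0 fn1] := f01 n.
have p0 : 0 <= \prod_(i < n) f i by apply: prodr_ge0 => i _; case/andP: (f01 i).
case: (boolP (P n)) => Pn /=.
- by rewrite expr1; apply: ler_pM => //; apply: fa.
- by rewrite expr0; apply: ler_pM.
Qed.

Lemma count_iota_leq (P : pred nat) m n : (m <= n)%N ->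
  (count P (iota 0 m) <= count P (iota 0 n))%N.
Proof. by move=> /subnKC <-; rewrite iotaD count_cat leq_addr. Qed.

Lemma count_iota_ge (P : pred nat) m n : (m <= n)%N ->
  (forall i, (m <= i < n)%N -> P i) -> (n - m <= count P (iota 0 n))%N.
Proof.
move=> mn Pmn; rewrite -{2}(subnKC mn) iotaD count_cat add0n.
have /allP : {in iota m (n - m), forall i, P i}.
  by move=> i; rewrite mem_iota subnKC //; apply: Pmn.
by rewrite all_count size_iota => /eqP ->; rewrite leq_addl.
Qed.

Lemma ln_ge_1_subV (R : realType) (x : R) : 0 < x -> 1 - x^-1 <= ln x.
Proof.
by move=> x0; have := expR_ge1Dx (- ln x); rewrite expRN lnK ?posrE //; lra.
Qed.

Lemma expVn_ge0_le1 (R : realFieldType) (x : R) n : 1 <= x -> 0 <= x ^- n <= 1.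
Proof.
move=> x1; have xn1 := exprn_ege1 n x1.
have xn0 : 0 < x ^+ n by apply: lt_le_trans xn1.
by rewrite invr_ge0 invf_le1 // (ltW xn0).
Qed.

Lemma natS_mul_2eVn_le_expRN (R : realType) (T : nat) :
  T.+1%:R * (2 * expR 1 : R) ^- T <= expR (- T%:R).
Proof.
rewrite -[T%:R]mulr1 expRN expRM_natl exprMn invfM mulrA.
rewrite -[X in _ <= X]mul1r; apply: ler_wpM2r.
  by rewrite invr_ge0 exprn_ge0 // expR_ge0.
have h2 : (T.+1%:R : R) <= 2 ^+ T by rewrite -natrX ler_nat ltn_expl.
have h0 : (0 : R) < 2 ^+ T by rewrite exprn_gt0.
by rewrite mulrC -ler_pdivlMl // mulr1 invrK.
Qed.

Lemma one_add_sqrt_lt_sqrt (R : rcfType) (L a b : R) :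
  0 < a -> 0 < b -> a < L -> 12 * L <= b ->
  1 + Num.sqrt (2 * L / b) < Num.sqrt (2 * L / a).
Proof.
move=> a0 b0 aL bL.
have hy0 : 0 <= 2 * L / b by apply: divr_ge0; lra.
have hz0 : 0 <= 2 * L / a by apply: divr_ge0; lra.
have hy : 2 * L / b <= 1 / 6 by rewrite ler_pdivrMr //; lra.
have hz : 2 < 2 * L / a by rewrite ltr_pdivlMr //; lra.
have := sqr_sqrtr hy0; have := sqr_sqrtr hz0.
have := sqrtr_ge0 (2 * L / b); have := sqrtr_ge0 (2 * L / a).
set y := Num.sqrt (2 * L / b); set z := Num.sqrt (2 * L / a).
move=> z0 y0 ez ey.
(* (1 + y)^2 <= 1 + 5/6 + 1/6 = 2 < z^2 *)
have : 2 * y <= 5 / 6 by nra.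
nra.
Qed.

Lemma size_ucb_hist (R : realType) K T tb X t : size (@ucb_hist R K T tb X t) = t.
Proof. by elim: t => //= t IH; rewrite size_rcons IH. Qed.

Lemma npulls_rcons K (h : seq ('I_K * bool)) p i :
  npulls (rcons h p) i = (npulls h i + (p.1 == i))%N.
Proof. by rewrite /npulls -cats1 count_cat /= addn0. Qed.

Lemma npulls_ucb_hist (R : realType) K T tb X t (i : 'I_K) :
  npulls (@ucb_hist R K T tb X t) i =
  count (fun s => ucb_arm R T tb X s == i) (iota 0 t).
Proof.
elim: t => // t IH; rewrite -[in iota _ t.+1]addn1 iotaD /= npulls_rcons IH.
by rewrite count_cat /= addn0.
Qed.

Lemma npulls_ord0_add_ord_max (h : seq ('I_2 * bool)) :
  (npulls h ord0 + npulls h ord_max)%N = size h.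
Proof.
elim: h => //= p h IH; rewrite /npulls /= -/(npulls h ord0) -/(npulls h ord_max).
by case: p => [[[|[|//]] ?] b] /=; rewrite -IH /=; lia.
Qed.

Lemma tb_set1 K (tb : {set 'I_K} -> 'I_K) (i : 'I_K) :
  (forall A : {set 'I_K}, A != finset.set0 -> tb A \in A) -> tb [set i] = i.
Proof.
move=> htb; have : tb [set i] \in [set i].
  by apply: htb; apply/set0Pn; exists i; rewrite inE.
by rewrite inE => /eqP.
Qed.

Section ExpectedMean.
Variables (R : realType) (K T : nat) (mu : 'I_K -> R).
Hypothesis mu01 : forall i, 0 <= mu i <= 1.

Lemma sum_prob : \sum_(w : omega K T) prob mu w = 1.
Proof.
rewrite /prob -(bigA_distr_bigA (fun p (b : bool) => if b then mu p.1 else 1 - mu p.1)).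
by apply: big1 => p _; rewrite big_bool /= addrC subrK.
Qed.

Lemma prob_ge0 (w : omega K T) : 0 <= prob mu w.
Proof.
apply: prodr_ge0 => p _; have /andP[mu0 mu1] := mu01 p.1.
by case: (w p); lra.
Qed.

Lemma prob_mulr_le (w : omega K T) i : prob mu w * mu i <= prob mu w.
Proof.
by rewrite -[leRHS]mulr1; apply: ler_wpM2l; [apply: prob_ge0 | case/andP: (mu01 i)].
Qed.

Lemma exp_mean_ge0 tb t : 0 <= exp_mean T mu tb t.
Proof.
apply: sumr_ge0 => w _; apply: mulr_ge0; first exact: prob_ge0.
by case/andP: (mu01 (ucb_arm R T tb (rew w) t)).
Qed.

Lemma exp_mean_le1 tb t : exp_mean T mu tb t <= 1.
Proof. by rewrite -sum_prob; apply: ler_sum => w _; apply: prob_mulr_le. Qed.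

Lemma exp_mean_le_outcome tb t (w0 : omega K T) :
  exp_mean T mu tb t <= mu (ucb_arm R T tb (rew w0) t) + (1 - prob mu w0).
Proof.
have := sum_prob; rewrite (bigD1 w0) //= => sum1.
rewrite /exp_mean (bigD1 w0) //=.
have rest : \sum_(w | w != w0) prob mu w * mu (ucb_arm R T tb (rew w) t)
            <= \sum_(w | w != w0) prob mu w.
  by apply: ler_sum => w _; apply: prob_mulr_le.
have rest0 : 0 <= \sum_(w | w != w0) prob mu w.
  by apply: sumr_ge0 => w _; apply: prob_ge0.
have p0 := prob_ge0 w0; have /andP[a0 a1] := mu01 (ucb_arm R T tb (rew w0) t).
have : prob mu w0 * mu (ucb_arm R T tb (rew w0) t) <= mu (ucb_arm R T tb (rew w0) t).
  by rewrite -[leRHS]mul1r; apply: ler_wpM2r => //; lra.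
lra.
Qed.

End ExpectedMean.

Definition two_armed (R : realType) (m : R) : 'I_2 -> R :=
  fun i => if i == ord0 then m else 1.

Definition likely_outcome T : omega 2 T := [ffun p => p.1 != ord0].

Section TwoArmed.
Variables (R : realType) (T : nat) (m : R).
Hypothesis m01 : 0 <= m <= 1.

Lemma two_armed01 i : 0 <= two_armed m i <= 1.
Proof. by rewrite /two_armed; case: (i == ord0); rewrite ?ler01 ?lexx. Qed.

Lemma prob_likely_outcome : 1 - T%:R * m <= prob (two_armed m) (likely_outcome T).
Proof.
set f := fun p : 'I_2 * 'I_T =>
  if likely_outcome T p then two_armed m p.1 else 1 - two_armed m p.1.
have f01 p : 0 <= f p <= 1.
  by rewrite /f; have /andP[? ?] := two_armed01 p.1; case: (likely_outcome T p); lra.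
apply: le_trans (prod_ge_1_sub_sum _ f01).
rewrite (eq_bigr (fun p => 1 - f (p.1, p.2))); last by case.
rewrite -(pair_big predT predT (fun i j => 1 - f (i, j))) /=.
rewrite big_ord_recl big_ord1 /f /two_armed /likely_outcome /=.
under eq_bigr do rewrite ffunE /= opprB addrC subrK.
under [X in _ - (_ + X)]eq_bigr do rewrite ffunE /= subrr.
by rewrite big1_eq addr0 sumr_const card_ord mulr_natl.
Qed.

Lemma exp_mean_two_armed_le tb t :
  exp_mean T (two_armed m) tb t
  <= two_armed m (ucb_arm R T tb (rew (likely_outcome T)) t) + T%:R * m.
Proof.
apply: le_trans (exp_mean_le_outcome two_armed01 tb t (likely_outcome T)) _.
by rewrite lerD2l; have := prob_likely_outcome; lra.
Qed.

End TwoArmed.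

Definition likely_hist (h : seq ('I_2 * bool)) := all (fun p => p.2 == (p.1 != ord0)) h.

Lemma likely_hist_ucb (R : realType) T tb t : (t <= T)%N ->
  likely_hist (@ucb_hist R 2 T tb (rew (likely_outcome T)) t).
Proof.
elim: t => //= t IH tT; rewrite /likely_hist all_rcons -/(likely_hist _) IH ?andbT.
  by rewrite /= /rew insubT /= ffunE.
exact: ltnW.
Qed.

Lemma rsum_likely_hist (R : realType) h i : likely_hist h ->
  rsum R h i = (i != ord0)%:R * (npulls h i)%:R.
Proof.
rewrite /rsum /npulls; elim: h => [|p h IH] /=; first by rewrite big_nil mulr0.
move=> /andP[/eqP hp hh]; rewrite big_cons IH //.
case: eqP => [<-|_]; last by rewrite add0n.
by rewrite hp; case: (p.1 != ord0); rewrite /= ?mul1r ?mul0r ?natrD ?add0r ?addr0.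
Qed.

Lemma ucb_ord_max_lt_ord0 (R : realType) T h : likely_hist h ->
  (0 < npulls h ord_max)%N -> (npulls h ord0)%:R < ln (T%:R : R) ->
  12 * ln (T%:R : R) <= (npulls h ord_max)%:R ->
  (ucb R T h ord_max < ucb R T h ord0)%E.
Proof.
move=> hh n1 n0L n1L; rewrite /ucb gtn_eqF // rsum_likely_hist //= mul1r.
rewrite divff ?pnatr_eq0 -?lt0n //.
case: ifP => [_|/negbT n0]; first exact: ltry.
rewrite rsum_likely_hist // eqxx !mul0r add0r lte_fin.
by apply: one_add_sqrt_lt_sqrt; rewrite // ltr0n // lt0n.
Qed.

Lemma ucb_max_ord0 (R : realType) T (h : seq ('I_2 * bool)) :
  (ucb R T h ord_max < ucb R T h ord0)%E -> ucb_max R T h = [set ord0].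
Proof.
have ord2 (i : 'I_2) : i = ord0 \/ i = ord_max.
  by case: i => [[|[|//]] ?]; [left|right]; apply/val_inj.
move=> hlt; apply/setP => i; rewrite !inE.
case: (ord2 i) => ->; rewrite ?eqxx.
  by apply/forallP => j; case: (ord2 j) => ->; [exact: lexx | exact: ltW].
by apply/negbTE/negP => /forallP /(_ ord0); rewrite leNgt hlt.
Qed.

Section LikelyRun.
Variables (R : realType) (T : nat) (tb : {set 'I_2} -> 'I_2).
Hypothesis htb : forall A : {set 'I_2}, A != finset.set0 -> tb A \in A.

Let arm t := ucb_arm R T tb (rew (likely_outcome T)) t.
Let n0 t := npulls (@ucb_hist R 2 T tb (rew (likely_outcome T)) t) ord0.
Let L := ln (T%:R : R).

Lemma likely_arm_ord0 t : (n0 T)%:R < L -> (t < T)%N -> 13 * L <= t%:R -> arm t = ord0.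
Proof.
move=> n0TL tT tL; set h := ucb_hist R T tb (rew (likely_outcome T)) t.
have n0t : (npulls h ord0)%:R < L.
  apply: le_lt_trans n0TL; rewrite ler_nat /n0 !npulls_ucb_hist.
  by apply: count_iota_leq; apply: ltnW.
have n01 : (npulls h ord0)%:R + (npulls h ord_max)%:R = t%:R :> R.
  by rewrite -natrD npulls_ord0_add_ord_max size_ucb_hist.
have n0_ge0 := ler0n R (npulls h ord0).
have n1L : 12 * L <= (npulls h ord_max)%:R by lra.
rewrite /arm /ucb_arm -/h ucb_max_ord0 ?tb_set1 //.
apply: ucb_ord_max_lt_ord0 => //; first by apply: likely_hist_ucb; apply: ltnW.
by rewrite -(ltr0n R); lra.
Qed.

Lemma ln_le_npulls_ord0 : 25 * L < T%:R -> L <= (n0 T)%:R.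
Proof.
move=> hT; rewrite leNgt; apply/negP => n0TL.
have L0 : 0 < L by apply: le_lt_trans n0TL.
have T1 : 1 < (T%:R : R).
  by rewrite ltNge; apply/negP => /ln_le0; rewrite -/L; lra.
have Lhalf : 1 / 2 <= L.
  have := ln_ge_1_subV (lt_trans ltr01 T1); rewrite -/L.
  have : (T%:R : R)^-1 <= 2^-1.
    rewrite lef_pV2 ?posrE //; last lra.
    by rewrite (ler_nat R 2 T) -(ltr_nat R).
  lra.
set s := (Num.truncn (13 * L)).+1.
have s_gt : 13 * L < s%:R by apply: truncnS_gt.
have s_le : s%:R <= 13 * L + 1.
  have := truncn_itv (_ : 0 <= 13 * L); rewrite /s -natr1.
  by move=> /(_ ltac:(lra)) /andP[? _]; lra.
have sT : (s <= T)%N by rewrite -(ler_nat R); lra.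
(* From round s on arm [ord0] is always pulled, so T - s <= n0 T < L,
   i.e. T < 14 L + 1 <= 25 L. *)
have : (T - s <= n0 T)%N.
  rewrite /n0 npulls_ucb_hist; apply: count_iota_ge => // t /andP[st tT].
  apply/eqP; apply: likely_arm_ord0 => //.
  by apply: le_trans (ltW s_gt) _; rewrite ler_nat.
by rewrite -(ler_nat R) natrB //; lra.
Qed.

End LikelyRun.

Lemma prod_exp_mean_two_armed_le (R : realType) T tb (m : R) : 0 <= m <= 1 ->
  \prod_(t < T) exp_mean T (two_armed m) tb t
  <= (T.+1%:R * m) ^+ npulls (@ucb_hist R 2 T tb (rew (likely_outcome T)) T) ord0.
Proof.
move=> m01; rewrite npulls_ucb_hist; apply: prod_le_expr_count.
- by apply: mulr_ge0 => //; case/andP: m01.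
- by move=> t; rewrite exp_mean_ge0 ?exp_mean_le1 //; apply: two_armed01.
- move=> t /eqP arm0 /=; apply: le_trans (exp_mean_two_armed_le T m01 tb t) _.
  by rewrite arm0 /two_armed eqxx -natr1 mulrDl mul1r addrC.
Qed.

Unset Implicit Arguments.
Theorem mainTheorem19 (R : realType) (T : nat) (tb : {set 'I_2} -> 'I_2)
  (htb : forall A : {set 'I_2}, A != finset.set0 -> tb A \in A)
  (hT : 25 * ln (T%:R : R) < T%:R) :
  let mu : 'I_2 -> R := fun i => if i == ord0 then (2 * expR 1) ^- T else 1 in
  1 - (T%:R)^-1 <= nash_regret mu T tb.
Proof.
change (1 - (T%:R : R)^-1 <= nash_regret (two_armed ((2 * expR 1 : R) ^- T)) T tb).
set m : R := (2 * expR 1) ^- T.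
have m01 : 0 <= m <= 1.
  by apply: expVn_ge0_le1; have := expR_ge1Dx (1 : R); lra.
have T0 : (0 < (T%:R : R)).
  by rewrite ltr0n lt0n; apply/negP => /eqP T0; move: hT; rewrite T0 ln0 //; lra.
set L := ln (T%:R : R) in hT *.
set P := \prod_(t < T) exp_mean T (two_armed m) tb t.
have P0 : 0 <= P by apply: prodr_ge0 => t _; apply: exp_mean_ge0; apply: two_armed01.
have P_le : P <= expR (- (T%:R * L)).
  apply: le_trans (prod_exp_mean_two_armed_le T tb m01) _.
  set n0 := npulls _ ord0.
  apply: (le_trans (y := expR (- T%:R) ^+ n0)).
    apply: lerXn2r; rewrite ?nnegrE ?expR_ge0 ?natS_mul_2eVn_le_expRN //.
    by apply: mulr_ge0 => //; case/andP: m01.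
  rewrite -expRM_natr ler_expR mulNr lerN2; apply: ler_wpM2l; first exact: ltW.
  exact: ln_le_npulls_ord0.
have root_le : powR P T%:R^-1 <= T%:R^-1.
  apply: le_trans (ge0_ler_powR _ _ _ P_le) _; rewrite ?invr_ge0 ?nnegrE ?expR_ge0 //.
  by rewrite -expRM mulNr mulrAC divff ?mul1r ?gt_eqF // expRN lnK.
have star_ge1 : 1 <= mu_star (two_armed m) by apply: le_trans (le_bigmax _ _ ord_max).
by apply: lerB.
Qed.
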